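(* Let $(A_i,\omega_i)$, $i=1,2$, be commutative unital baric algebras over $K$ that are both indecomposable. Then $(A_1\bowtie A_2,\omega_1\bowtie\omega_2)$ is indecomposable.
   Context: A baric algebra over a field $K$ is a pair $(A,\omega)$ where $A$ is a (not necessarily associative) $K$-algebra and $\omega:A\to K$ is a nonzero $K$-algebra homomorphism. For baric algebras $(A_1,\omega_1),(A_2,\omega_2)$, $A_1\bowtie A_2$ denotes the vector space $A_1\oplus A_2$ with product $(a_1,a_2)(b_1,b_2)=(a_1b_1+\omega_2(b_2)a_1,\ a_2b_2+\omega_1(b_1)a_2)$, and $\omega_1\bowtie\omega_2(a_1,a_2)=\omega_1(a_1)+\omega_2(a_2)$. A baric algebra $(A,\omega)$ possessing an idempotent of weight $1$ is called decomposable if there exist nonzero two-sided ideals $N_1,N_2$ of $A$, both contained in $\operatorname{Ker}\omega$, with $\operatorname{Ker}\omega=N_1\oplus N_2$; otherwise it is indecomposable. (In a unital baric algebra the unit is an idempotent of weight 1, and $(1,0)$ is an idempotent of weight 1 in $A_1\bowtie A_2$.) *)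

(* A (not necessarily associative) K-algebra is represented by
   a K-vector space A : lmodType K together with a bilinear multiplication
   m : A -> A -> A.  Subspaces/ideals are predicates A -> Prop (no finite
   dimensionality is assumed). *)
From mathcomp Require Import all_boot all_order all_algebra.
Set Implicit Arguments. Unset Strict Implicit. Unset Printing Implicit Defensive.
Import GRing.Theory.
Local Open Scope ring_scope.

Section Baric.
Variables (K : fieldType) (A : lmodType K).

Definition bilinear_mul (m : A -> A -> A) : Prop :=
  (forall (a : K) (x y z : A), m (a *: x + y) z = a *: m x z + m y z) /\
  (forall (a : K) (x y z : A), m x (a *: y + z) = a *: m x y + m x z).

Definition weight_fun (m : A -> A -> A) (w : A -> K) : Prop :=
  [/\ forall (a : K) (x y : A), w (a *: x + y) = a * w x + w y,
      forall x y : A, w (m x y) = w x * w y &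
      exists x : A, w x != 0].

Definition baric (m : A -> A -> A) (w : A -> K) : Prop :=
  bilinear_mul m /\ weight_fun m w.

Definition commutative_alg (m : A -> A -> A) : Prop :=
  forall x y : A, m x y = m y x.

Definition unital_alg (m : A -> A -> A) : Prop :=
  exists e : A, forall x : A, m e x = x /\ m x e = x.

Definition two_sided_ideal (m : A -> A -> A) (N : A -> Prop) : Prop :=
  [/\ N 0,
      forall (a : K) (x y : A), N x -> N y -> N (a *: x + y),
      forall x y : A, N y -> N (m x y) &
      forall x y : A, N x -> N (m x y)].

Definition has_weight1_idempotent (m : A -> A -> A) (w : A -> K) : Prop :=
  exists e : A, m e e = e /\ w e = 1.

Definition kernel_splits (m : A -> A -> A) (w : A -> K) : Prop :=
  exists N1 N2 : A -> Prop,
    two_sided_ideal m N1 /\ two_sided_ideal m N2 /\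
    (exists x, N1 x /\ x != 0) /\ (exists x, N2 x /\ x != 0) /\
    (forall x, N1 x -> w x = 0) /\ (forall x, N2 x -> w x = 0) /\
    (forall x, w x = 0 -> exists x1 x2, N1 x1 /\ N2 x2 /\ x = x1 + x2) /\
    (forall x, N1 x -> N2 x -> x = 0).

Definition decomposable (m : A -> A -> A) (w : A -> K) : Prop :=
  has_weight1_idempotent m w /\ kernel_splits m w.

Definition indecomposable (m : A -> A -> A) (w : A -> K) : Prop :=
  has_weight1_idempotent m w /\ ~ kernel_splits m w.

End Baric.

Definition bowtie_mul (K : fieldType) (A1 A2 : lmodType K)
    (m1 : A1 -> A1 -> A1) (w1 : A1 -> K) (m2 : A2 -> A2 -> A2) (w2 : A2 -> K)
    (x y : (A1 * A2)%type) : (A1 * A2)%type :=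
  (m1 x.1 y.1 + w2 y.2 *: x.1, m2 x.2 y.2 + w1 y.1 *: x.2).

Definition bowtie_weight (K : fieldType) (A1 A2 : lmodType K)
    (w1 : A1 -> K) (w2 : A2 -> K) (x : (A1 * A2)%type) : K :=
  w1 x.1 + w2 x.2.

(* Let u1, u2 be the units; both have weight 1.  The element f = (u1, -u2)
   spans the "twist" of Ker(w1 ⋈ w2), and for every two-sided ideal N:
   - if x ∈ N has weight 0, then w1(x.1) f ∈ N, because
     x - (0,u2)x - (u1,0)x = w1(x.1) f;
   - if f ∈ N, then N contains all of Ker(w1 ⋈ w2), since every x of weight
     0 is a combination of f, f x and (u1,0)(f x).
   If Ker = N1 ⊕ N2, write f = n1 + n2.  The first components have weights
   adding up to w1 u1 = 1, so some ni has w1(ni.1) ≠ 0; then f ∈ Ni, hence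
   Ni = Ker, and the other ideal, a nonzero subspace of Ker meeting Ni
   trivially, must vanish: a contradiction.  Finally (u1, 0) is an idempotent
   of weight 1. *)
From mathcomp Require Import all_boot all_order all_algebra.
Import GRing.Theory.
Local Open Scope ring_scope.
Set Implicit Arguments. Unset Strict Implicit.

Section LinearMaps.
Variables (K : fieldType) (A B : lmodType K) (g : A -> B).
Hypothesis g_lin : forall (a : K) (x y : A), g (a *: x + y) = a *: g x + g y.

Lemma lin0 : g 0 = 0.
Proof.
have := g_lin 1 0 0; rewrite scaler0 addr0 scale1r => h.
by apply: (@addrI _ (g 0)); rewrite addr0 -h.
Qed.

Lemma linD (x y : A) : g (x + y) = g x + g y.
Proof. by rewrite -[x]scale1r g_lin !scale1r. Qed.

Lemma linZ (a : K) (x : A) : g (a *: x) = a *: g x.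
Proof. by rewrite -[a *: x]addr0 g_lin lin0 addr0. Qed.

Lemma linN (x : A) : g (- x) = - g x.
Proof. by rewrite -scaleN1r linZ scaleN1r. Qed.

End LinearMaps.

(* The same rules for scalar-valued linear forms, seen as linear maps into
   the regular module K^o. *)
Section LinearForms.
Variables (K : fieldType) (A : lmodType K) (w : A -> K).
Hypothesis w_lin : forall (a : K) (x y : A), w (a *: x + y) = a * w x + w y.

Let w' : A -> K^o := w.
Let w_lin' : forall (a : K) (x y : A), w' (a *: x + y) = a *: w' x + w' y := w_lin.

Lemma form0 : w 0 = 0.
Proof. exact: lin0 w_lin'. Qed.

Lemma formD (x y : A) : w (x + y) = w x + w y.
Proof. exact: (linD w_lin' x y). Qed.

Lemma formZ (a : K) (x : A) : w (a *: x) = a * w x.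
Proof. exact: (linZ w_lin' a x). Qed.

Lemma formN (x : A) : w (- x) = - w x.
Proof. exact: (linN w_lin' x). Qed.

End LinearForms.

Section Ideals.
Variables (K : fieldType) (A : lmodType K) (m : A -> A -> A) (N : A -> Prop).
Hypothesis N_ideal : two_sided_ideal m N.

Lemma ideal_scale (a : K) (x : A) : N x -> N (a *: x).
Proof.
by case: N_ideal => N0 NZ _ _ Nx; rewrite -[a *: x]addr0; apply: NZ.
Qed.

Lemma ideal_add (x y : A) : N x -> N y -> N (x + y).
Proof. by case: N_ideal => _ NZ _ _ Nx Ny; rewrite -[x]scale1r; apply: NZ. Qed.

Lemma ideal_sub (x y : A) : N x -> N y -> N (x - y).
Proof. by move=> Nx Ny; rewrite -scaleN1r; apply: ideal_add; last apply: ideal_scale. Qed.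

End Ideals.

Lemma unit_weight (K : fieldType) (A : lmodType K) (m : A -> A -> A)
    (w : A -> K) (u : A) :
  weight_fun m w -> (forall x, m u x = x) -> w u = 1.
Proof. by move=> [_ wM [x nz_x]] hu; apply: (mulIf nz_x); rewrite mul1r -wM hu. Qed.

Section Bowtie.
Variables (K : fieldType) (A1 A2 : lmodType K).
Variables (m1 : A1 -> A1 -> A1) (w1 : A1 -> K) (m2 : A2 -> A2 -> A2) (w2 : A2 -> K).
Hypothesis m1_lin : forall (a : K) (x y z : A1), m1 (a *: x + y) z = a *: m1 x z + m1 y z.
Hypothesis m2_lin : forall (a : K) (x y z : A2), m2 (a *: x + y) z = a *: m2 x z + m2 y z.
Hypothesis w1_lin : forall (a : K) (x y : A1), w1 (a *: x + y) = a * w1 x + w1 y.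
Hypothesis w2_lin : forall (a : K) (x y : A2), w2 (a *: x + y) = a * w2 x + w2 y.
Variables (u1 : A1) (u2 : A2).
Hypothesis u1_unit : forall x, m1 u1 x = x.
Hypothesis u2_unit : forall x, m2 u2 x = x.
Hypothesis u1_weight : w1 u1 = 1.
Hypothesis u2_weight : w2 u2 = 1.

Local Notation M := (bowtie_mul m1 w1 m2 w2).
Local Notation W := (bowtie_weight w1 w2).

Let w2_0 : w2 0 = 0 := form0 w2_lin.
Let m1_0 z : m1 0 z = 0 := lin0 (fun a x y => m1_lin a x y z).
Let m2_0 z : m2 0 z = 0 := lin0 (fun a x y => m2_lin a x y z).

Definition twist : (A1 * A2)%type := (u1, - u2).

Lemma twist_weight : W twist = 0.
Proof. by rewrite /bowtie_weight /= (formN w2_lin) u1_weight u2_weight subrr. Qed.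

Lemma mul_unit1 (a1 : A1) (a2 : A2) : M (u1, 0) (a1, a2) = (a1 + w2 a2 *: u1, 0).
Proof. by rewrite /bowtie_mul /= u1_unit m2_0 scaler0 addr0. Qed.

Lemma mul_unit2 (a1 : A1) (a2 : A2) : M (0, u2) (a1, a2) = (0, a2 + w1 a1 *: u2).
Proof. by rewrite /bowtie_mul /= u2_unit m1_0 scaler0 addr0. Qed.

Lemma mul_twist (a1 : A1) (a2 : A2) :
  M twist (a1, a2) = (a1 + w2 a2 *: u1, - a2 - w1 a1 *: u2).
Proof.
by rewrite /bowtie_mul /= u1_unit (linN (fun a x y => m2_lin a x y a2)) u2_unit scalerN.
Qed.

Lemma bowtie_has_idempotent : has_weight1_idempotent M W.
Proof.
exists (u1, 0); rewrite mul_unit1 w2_0 scale0r addr0.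
by split; rewrite // /bowtie_weight /= u1_weight w2_0 addr0.
Qed.

Section IdealsOfBowtie.
Variable N : (A1 * A2)%type -> Prop.
Hypothesis N_ideal : two_sided_ideal M N.

Lemma ideal_weight0_twist (x : A1 * A2) : N x -> W x = 0 -> N (w1 x.1 *: twist).
Proof.
case: N_ideal => _ _ N_left _; case: x => a1 a2 Nx; rewrite /bowtie_weight /= => Wx.
have w2a2 : w2 a2 = - w1 a1 by apply/eqP; rewrite -addr_eq0 addrC Wx.
have := ideal_sub N_ideal (ideal_sub N_ideal Nx (N_left (0, u2) _ Nx)) (N_left (u1, 0) _ Nx).
rewrite mul_unit1 mul_unit2 w2a2; congr N; rewrite /twist; congr pair => /=.
  by rewrite subr0 opprD addrA subrr add0r scaleNr opprK.
by rewrite subr0 opprD addrA subrr add0r scalerN.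
Qed.

Lemma ideal_twist_kernel (x : A1 * A2) : N twist -> W x = 0 -> N x.
Proof.
case: N_ideal => _ _ N_left N_right; case: x => a1 a2 Nf; rewrite /bowtie_weight /= => Wx.
have w2a2 : w2 a2 = - w1 a1 by apply/eqP; rewrite -addr_eq0 addrC Wx.
(* With c = w1 a1: x = 2 (u1,0)(twist x) - twist x + c twist. *)
have Ntx := N_right _ (a1, a2) Nf; rewrite mul_twist w2a2 scaleNr in Ntx.
have Nutx := N_left (u1, 0) _ Ntx; rewrite mul_unit1 in Nutx.
rewrite (formD w2_lin) !(formN w2_lin) (formZ w2_lin) u2_weight w2a2 in Nutx.
rewrite mulr1 opprK subrr scale0r addr0 in Nutx.
have := ideal_add N_ideal (ideal_sub N_ideal (ideal_add N_ideal Nutx Nutx) Ntx)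
  (ideal_scale N_ideal (w1 a1) Nf).
congr N; rewrite /twist; congr pair => /=.
  by rewrite addrK subrK.
by rewrite !add0r opprD !opprK scalerN addrK.
Qed.

End IdealsOfBowtie.

Lemma bowtie_kernel_not_split : ~ kernel_splits M W.
Proof.
move=> [N1 [N2 [I1 [I2 [[y1 [Ny1 nz1]] [[y2 [Ny2 nz2]] [K1 [K2 [split_ker disj]]]]]]]]].
have [n1 [n2 [Nn1 [Nn2 def_twist]]]] := split_ker _ twist_weight.
have sum_weights : w1 n1.1 + w1 n2.1 = 1.
  by rewrite -(formD w1_lin) -u1_weight [u1](congr1 fst def_twist).
have [w0 | wn0] := eqVneq (w1 n1.1) 0.
  have := ideal_weight0_twist I2 Nn2 (K2 _ Nn2).
  rewrite w0 add0r in sum_weights; rewrite sum_weights scale1r => N2f.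
  by move: nz1; rewrite (disj y1 Ny1 (ideal_twist_kernel I2 N2f (K1 _ Ny1))) eqxx.
have := ideal_scale I1 (w1 n1.1)^-1 (ideal_weight0_twist I1 Nn1 (K1 _ Nn1)).
rewrite scalerA mulVf // scale1r => N1f.
by move: nz2; rewrite (disj y2 (ideal_twist_kernel I1 N1f (K2 _ Ny2)) Ny2) eqxx.
Qed.

Lemma bowtie_indecomposable : indecomposable M W.
Proof. by split; [exact: bowtie_has_idempotent | exact: bowtie_kernel_not_split]. Qed.

End Bowtie.

Theorem proposition5p5 (K : fieldType) (A1 A2 : lmodType K)
    (m1 : A1 -> A1 -> A1) (w1 : A1 -> K) (m2 : A2 -> A2 -> A2) (w2 : A2 -> K) :
  baric m1 w1 -> commutative_alg m1 -> unital_alg m1 -> indecomposable m1 w1 ->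
  baric m2 w2 -> commutative_alg m2 -> unital_alg m2 -> indecomposable m2 w2 ->
  indecomposable (bowtie_mul m1 w1 m2 w2) (bowtie_weight w1 w2).
Proof.
move=> [[m1_lin _] wf1] _ [u1 u1_unit] _ [[m2_lin _] wf2] _ [u2 u2_unit] _.
have u1_left x : m1 u1 x = x by case: (u1_unit x).
have u2_left x : m2 u2 x = x by case: (u2_unit x).
case: (wf1) (wf2) => w1_lin _ _ [w2_lin _ _].
exact: (bowtie_indecomposable m1_lin m2_lin w1_lin w2_lin u1_left u2_left
  (unit_weight wf1 u1_left) (unit_weight wf2 u2_left)).
Qed.
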